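(* For all integers $m\ge1$ and $n\ge1$, $$\sum_{k=1}^n k\binom{m+k-1}{k}^{-1}\binom{2m+k-1}{k}=\frac{[n(m+1)-m+1](m+n)}{(m+1)(m+2)}\binom{m+n}{n+1}^{-1}\binom{2m+n}{n+1}+\frac{2m(m-1)}{(m+1)(m+2)}.$$ *)

From mathcomp Require Import all_boot all_order all_algebra.

From mathcomp Require Import all_boot all_order all_algebra.
From mathcomp Require Import ring zify.
Import GRing.Theory Num.Theory.
Local Open Scope ring_scope.

(* The identity is proved by telescoping.  Writing the k-th summand as
   k * r (k - 1), where r j = C(2m+j, j+1) / C(m+j, j+1), the right-hand side
   becomes F n = a n * r n + c with a n = (n(m+1) - m + 1)(m+n) / ((m+1)(m+2))
   and c = 2m(m-1) / ((m+1)(m+2)).  Pascal's absorption identity gives the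
   first-order recurrence r (j+1) = r j * (2m+j+1) / (m+j+1) together with
   r 0 = 2.  From these, F 0 = 0 and F (n+1) - F n = (n+1) r n, which is a
   polynomial identity in m and n once r (n+1) is eliminated; induction on n
   then yields the sum, and the theorem is F n with r n unfolded.
   Note that the closed form also holds for n = 0 (empty sum). *)

Lemma binS_rat (a k : nat) :
  ('C(a.+1, k.+1)%:R : rat) = a.+1%:R / k.+1%:R * 'C(a, k)%:R.
Proof.
have /(congr1 (fun x => x%:R : rat)) := mul_bin_diag a.+1 k.
rewrite !natrM /= => absorb.
apply: (@mulfI _ k.+1%:R); first by rewrite pnatr_eq0.
by rewrite -absorb; field; rewrite nat1r pnatr_eq0.
Qed.

Section TelescopingSum.
Variable m : nat.
Hypothesis m_gt0 : (0 < m)%N.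

Definition ratio (j : nat) : rat := 'C(2 * m + j, j.+1)%:R / 'C(m + j, j.+1)%:R.

Definition closed_form (n : nat) : rat :=
  ((n * (m + 1))%:R - m%:R + 1) * (m + n)%:R / ((m + 1) * (m + 2))%:R * ratio n
  + (2 * m * (m - 1))%:R / ((m + 1) * (m + 2))%:R.

(* Initial value: C(2m, 1) / C(m, 1) = 2m / m. *)
Lemma ratio0 : ratio 0 = 2.
Proof. by rewrite /ratio !addn0 !bin1 natrM mulfK // pnatr_eq0 -lt0n. Qed.

Lemma ratioS (j : nat) : ratio j.+1 = ratio j * (2 * m + j).+1%:R / (m + j).+1%:R.
Proof.
have binC_neq0 : ('C(m + j, j.+1)%:R : rat) != 0.
  by rewrite pnatr_eq0 -lt0n bin_gt0; lia.
rewrite /ratio !addnS !binS_rat; field.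
by rewrite binC_neq0 -!natrD nat1r !pnatr_eq0.
Qed.

Lemma closed_form0 : closed_form 0 = 0.
Proof.
rewrite /closed_form ratio0 mul0n addn0 !natrM natrB //; field.
by rewrite natr1 -natrD !pnatr_eq0 addn2.
Qed.

(* After eliminating r (n+1) by ratioS this is the polynomial identity
   (n(m+1)+2)(2m+n+1) - (n(m+1)-m+1)(m+n) = (n+1)(m+1)(m+2). *)
Lemma closed_formS (n : nat) :
  closed_form n.+1 = closed_form n + n.+1%:R * ratio n.
Proof.
rewrite /closed_form ratioS addnS; field.
by rewrite -!natrD !nat1r !pnatr_eq0 addn2.
Qed.

Lemma summand_ratio (j : nat) :
  j.+1%:R * ('C(m + j.+1 - 1, j.+1)%:R : rat)^-1 * 'C(2 * m + j.+1 - 1, j.+1)%:R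
  = j.+1%:R * ratio j.
Proof. by rewrite !addnS !subn1 /= /ratio mulrAC -mulrA. Qed.

Lemma sum_closed_form (n : nat) :
  \sum_(1 <= k < n.+1)
      (k%:R * ('C(m + k - 1, k)%:R : rat)^-1 * 'C(2 * m + k - 1, k)%:R)
  = closed_form n.
Proof.
elim: n => [|n IH]; first by rewrite big_geq // closed_form0.
by rewrite big_nat_recr //= IH summand_ratio closed_formS.
Qed.

End TelescopingSum.

(* The identity of the paper: the sum equals the closed form, with the ratio
   of binomials written out. *)
Theorem mainTheorem11 (m n : nat) (hm : (1 <= m)%N) (hn : (1 <= n)%N) :
  \sum_(1 <= k < n.+1) (k%:R * ('C(m + k - 1, k)%:R : rat)^-1 * 'C(2 * m + k - 1, k)%:R)
  = ((n * (m + 1))%:R - m%:R + 1) * (m + n)%:R / ((m + 1) * (m + 2))%:R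
      * ('C(m + n, n + 1)%:R)^-1 * 'C(2 * m + n, n + 1)%:R
    + (2 * m * (m - 1))%:R / ((m + 1) * (m + 2))%:R.
Proof.
by rewrite (@sum_closed_form m hm n) /closed_form /ratio !addn1; ring.
Qed.
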